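(* Let $q$ be a prime power, $M\geq 2$ an integer, and let $f$ be a SCIM polynomial over $\mathbb{F}_{q^2}$ of odd degree $d$ such that $f(x^M)$ has a SCIM factor $g$ of degree $d$. Let $C_f\in\mathrm{U}(d,\mathbb{F}_{q^2})$ be a matrix with characteristic polynomial $f$. Then there exists $\alpha\in \mathrm{U}(d,\mathbb{F}_{q^2})$ such that $\alpha^M=C_f$.
   Context: For $a\in\mathbb{F}_{q^2}$ write $\bar a=a^q$, extended coefficientwise to matrices and polynomials. Let $\Lambda_n$ be the $n\times n$ matrix with $1$'s on the antidiagonal and $0$ elsewhere; the unitary group is $\mathrm{U}(n,\mathbb{F}_{q^2})=\{A\in \mathrm{GL}(n,\mathbb{F}_{q^2}) : A\Lambda_n\bar A^{t}=\Lambda_n\}$. For a monic polynomial $f$ of degree $d$ with $f(0)\neq 0$ define $\widetilde{f}(t)=\overline{f(0)}^{-1}t^d\bar f(t^{-1})$. A SCIM polynomial is a monic polynomial $f\in\mathbb{F}_{q^2}[t]$ with $f(0)\neq0$, irreducible over $\mathbb{F}_{q^2}$, with $\widetilde f=f$. *)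

From HB Require Import structures.
From mathcomp Require Import all_boot all_order all_algebra.
Set Implicit Arguments. Unset Strict Implicit. Unset Printing Implicit Defensive.
Import GRing.Theory.
Local Open Scope ring_scope.

(* F plays the role of F_{q^2}; conjugation a |-> a^q. *)
Definition fbar (F : finFieldType) (q : nat) (a : F) : F := a ^+ q.

Definition Lambda (F : finFieldType) (n : nat) : 'M[F]_n :=
  \matrix_(i < n, j < n) (if (i + j == n.-1)%N then 1 else 0).

Definition unitary (F : finFieldType) (q n : nat) (A : 'M[F]_n) : bool :=
  (A \in unitmx) &&
  (A *m Lambda F n *m (map_mx (@fbar F q) A)^T == Lambda F n).

Definition pbar (F : finFieldType) (q : nat) (f : {poly F}) : {poly F} :=
  map_poly (@fbar F q) f.

(* tilde f = conj(f(0))^{-1} t^d conj(f)(t^{-1}), with d = deg f;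
   t^d h(t^{-1}) = sum_{i<=d} h_i t^{d-i} is written out coefficientwise. *)
Definition ptilde (F : finFieldType) (q : nat) (f : {poly F}) : {poly F} :=
  let d := (size f).-1 in
  (fbar q f.[0])^-1 *: \poly_(i < d.+1) (pbar q f)`_(d - i).

Definition SCIM (F : finFieldType) (q : nat) (f : {poly F}) : Prop :=
  [/\ f \is monic, f.[0] != 0, irreducible_poly f & ptilde q f = f].

Definition mxpow (F : finFieldType) (n : nat) (A : 'M[F]_n) (k : nat) : 'M[F]_n :=
  iter k (mulmx A) 1%:M.

Definition prime_power (q : nat) : Prop :=
  exists p k, prime p /\ (0 < k)%N /\ q = (p ^ k)%N.

From HB Require Import structures.
From mathcomp Require Import all_boot all_order all_algebra all_field.
From mathcomp Require Import ring.
Import GRing.Theory.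
Set Implicit Arguments. Unset Strict Implicit. Unset Printing Implicit Defensive.
Local Open Scope ring_scope.

(* Since g divides f(X^M) and f is irreducible, h |-> h(X^M) induces an
   injective, hence (by counting) bijective, map F[X]/(f) -> F[X]/(g).  A p
   with p(X^M) = X mod g then satisfies p^M = X mod f, so alpha := p(C) has
   alpha^M = C by Cayley-Hamilton.  As C is unitary, alpha is unitary as soon
   as p(C) pbar(C^-1) = 1, i.e. p pbar(X^-1) = 1 mod f.  Transported to
   F[X]/(g) this reads X pbar(X^-M) = 1, which holds because pbar(X^M) = X
   mod gbar and, g being self-reciprocal, the inverse of every root of g is
   a root of gbar. *)

Section PolyCongruence.
Variable F : idomainType.
Implicit Types g a b c e h : {poly F}.

Lemma dvdp_subM g a b c e :
  g %| a - b -> g %| c - e -> g %| a * c - b * e.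
Proof.
move=> gab gce; have -> : a * c - b * e = a * (c - e) + (a - b) * e.
  by rewrite mulrBr mulrBl addrA subrK.
exact: dvdp_add (dvdp_mull _ gce) (dvdp_mulr _ gab).
Qed.

Lemma dvdp_subX g a b n : g %| a - b -> g %| a ^+ n - b ^+ n.
Proof. by move=> gab; rewrite subrXX dvdp_mulr. Qed.

Lemma dvdp_sub_comp g a b h : g %| a - b -> g %| (h \Po a) - (h \Po b).
Proof.
move=> gab; elim/poly_ind: h => [|h c IH]; first by rewrite !comp_poly0 subrr.
rewrite !(comp_polyD, comp_polyM, comp_polyX, comp_polyC).
by rewrite opprD addrACA subrr addr0 dvdp_subM.
Qed.

End PolyCongruence.

Lemma eq_modp_dvdp (F : fieldType) (g a b : {poly F}) :
  a %% g = b %% g -> g %| a - b.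
Proof. by move=> eq_ab; apply/modp_eq0P; rewrite modpD modpN eq_ab subrr. Qed.

Section CompXn.
Variables (F : fieldType) (M : nat) (f g : {poly F}).
Hypotheses (f_irr : irreducible_poly f) (g_gt1 : (1 < size g)%N).
Hypothesis g_dvd_fXM : g %| f \Po 'X^M.

(* A Bezout relation u f + v h = 1 would survive composition with X^M. *)
Lemma dvdp_comp_Xn_irr h : g %| h \Po 'X^M -> f %| h.
Proof.
move=> g_hXM; apply/negPn/negP => f_ndvd_h.
have := irreducible_poly_coprime h f_irr; rewrite (negbTE f_ndvd_h).
case/Bezout_eq1_coprimepP => [[u v]] /= uv1.
have : g %| (u * f + v * h) \Po 'X^M.
  by rewrite comp_polyD !comp_polyM dvdp_add ?dvdp_mull.
by rewrite uv1 comp_polyC polyC1 dvdp1 => /eqP g1; move: g_gt1; rewrite g1.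
Qed.

Lemma dvdp_expn_sub_X p : g %| (p \Po 'X^M) - 'X -> f %| p ^+ M - 'X.
Proof.
move=> gp; apply: dvdp_comp_Xn_irr.
by rewrite comp_polyB comp_polyX rmorphXn /= dvdp_subX.
Qed.

Lemma dvdp_conj_comp_inv (phi : {rmorphism F -> F}) s p r :
  g %| s * 'X - 1 -> g %| map_poly phi g \Po s ->
  g %| (p \Po 'X^M) - 'X -> f %| r * 'X - 1 ->
  f %| p * (map_poly phi p \Po r) - 1.
Proof.
move=> gs g_conj_s gp fr; apply: dvdp_comp_Xn_irr.
set pb := map_poly phi p; set rM := r \Po 'X^M.
rewrite comp_polyB comp_polyC polyC1 comp_polyM -comp_polyA -/rM.
have g_rM : g %| rM * 'X^M - 1.
  apply: dvdp_trans g_dvd_fXM _; have := dvdp_comp_poly 'X^M fr.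
  by rewrite comp_polyB comp_polyM comp_polyX comp_polyC.
have g_rM_sM : g %| rM - s ^+ M.
  have -> : rM - s ^+ M = - rM * ((s * 'X) ^+ M - 1) + (rM * 'X^M - 1) * s ^+ M.
    by rewrite exprMn; ring.
  apply: dvdp_add; last exact: dvdp_mulr.
  by apply: dvdp_mull; rewrite -(expr1n _ M) dvdp_subX.
have g_pb_sM : g %| (pb \Po s ^+ M) - s.
  have := gp; rewrite -(dvdp_map phi) rmorphB /= map_comp_poly map_polyXn map_polyX.
  move=> /(dvdp_comp_poly s); rewrite comp_polyB comp_polyX -comp_polyA comp_Xn_poly.
  exact: dvdp_trans g_conj_s.
have g_pb_rM : g %| (pb \Po rM) - s.
  by have := dvdp_add (dvdp_sub_comp pb g_rM_sM) g_pb_sM; rewrite addrA subrK.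
by have := dvdp_add (dvdp_subM gp g_pb_rM) gs; rewrite [s * _]mulrC addrA subrK.
Qed.

End CompXn.

Section CompXnFinite.
Variables (F : finFieldType) (M : nat) (f g : {poly F}).
Hypotheses (f_irr : irreducible_poly f) (g_gt1 : (1 < size g)%N).
Hypotheses (g_dvd_fXM : g %| f \Po 'X^M) (size_fg : size f = size g).

Lemma comp_Xn_mod_onto h : exists p, g %| (p \Po 'X^M) - h.
Proof.
set d := (size g).-1; have size_g : size g = d.+1 by rewrite prednK // ltnW.
have rV_modK a : rVpoly (poly_rV (a %% g) : 'rV_d) = a %% g.
  by apply: poly_rV_K; rewrite -ltnS -size_g ltn_modp -size_poly_gt0 ltnW.
pose comp_mod (t : 'rV[F]_d) : 'rV[F]_d := poly_rV ((rVpoly t \Po 'X^M) %% g).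
have comp_mod_inj : injective comp_mod.
  move=> t1 t2 /(congr1 rVpoly); rewrite !rV_modK => /eq_modp_dvdp.
  rewrite -comp_polyB -linearB /= => /(dvdp_comp_Xn_irr f_irr g_gt1 g_dvd_fXM).
  move=> f_dvd; apply/eqP; rewrite -subr_eq0 -(can_eq rVpolyK) linear0.
  apply/eqP; apply: contraTeq f_dvd => nz; apply/negP => /(dvdp_leq nz).
  by rewrite leqNgt size_fg size_g ltnS size_poly.
exists (rVpoly (invF comp_mod_inj (poly_rV (h %% g)))); apply: eq_modp_dvdp.
by have /(congr1 rVpoly) := f_invF comp_mod_inj (poly_rV (h %% g)); rewrite !rV_modK.
Qed.

End CompXnFinite.

Section Reciprocal.
Variable F : fieldType.
Implicit Types g h r s : {poly F}.

Lemma inverse_X_mod h : h.[0] != 0 -> exists r, h %| r * 'X - 1.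
Proof.
move=> h0; have : coprimep h 'X by rewrite coprimepX /root h0.
case/Bezout_eq1_coprimepP => [[u v]] /= uv1; exists v.
by rewrite -uv1 opprD addrCA subrr addr0 dvdpNr dvdp_mull.
Qed.

Lemma dvdp_reverse_comp_inv g s h d : (size h <= d.+1)%N -> g %| s * 'X - 1 ->
  g %| 'X^d * (h \Po s) - \poly_(i < d.+1) h`_(d - i).
Proof.
move=> size_h gs.
have -> : 'X^d * (h \Po s) - \poly_(i < d.+1) h`_(d - i)
    = \sum_(i < d.+1) h`_(d - i) *: ('X^i * ((s * 'X) ^+ (d - i) - 1)).
  rewrite /comp_poly (horner_coef_wide _ (_ : (size h^:P <= d.+1)%N)) ?size_map_polyC //.
  rewrite poly_def mulr_sumr (reindex_inj rev_ord_inj) /= -sumrB.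
  apply: eq_bigr => i _; rewrite coef_map /= subSS mul_polyC -scalerAr -scalerBr.
  rewrite mulrBr mulr1 exprMn mulrCA -exprD subnKC ?[_ * s ^+ _]mulrC //.
  by rewrite -ltnS ltn_ord.
apply: (big_ind (dvdp g)) => [|a b|i _]; [exact: dvdp0 | exact: dvdp_add |].
rewrite -mul_polyC !dvdp_mull // -(expr1n _ (d - i)); exact: dvdp_subX.
Qed.

Lemma dvdp_comp_inv g s h d :
  g.[0] != 0 -> (size h <= d.+1)%N -> g %| s * 'X - 1 ->
  g %| \poly_(i < d.+1) h`_(d - i) -> g %| h \Po s.
Proof.
move=> g0 size_h gs g_rev.
have g_coprime_Xd : coprimep g 'X^d by rewrite coprimep_expr // coprimepX /root g0.
rewrite -(Gauss_dvdpr _ g_coprime_Xd).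
by have := dvdp_add (dvdp_reverse_comp_inv size_h gs) g_rev; rewrite subrK.
Qed.

End Reciprocal.

Section HornerMx.
Variables (R : comNzRingType) (n : nat).
Implicit Types (A B L X : 'M[R]_n.+1) (h p : {poly R}).

Lemma horner_mx_intertwine A B X h :
  A * X = X * B -> horner_mx A h * X = X * horner_mx B h.
Proof.
move=> AXB; elim/poly_ind: h => [|h c IH]; first by rewrite !rmorph0 mul0r mulr0.
rewrite !(rmorphD, rmorphM) /= !(horner_mx_X, horner_mx_C) mulrDl mulrDr.
by rewrite -mulrA AXB mulrA IH mulrA -!mulmxE scalar_mxC.
Qed.

Lemma trmx_horner_mx A h : (horner_mx A h)^T = horner_mx A^T h.
Proof.
elim/poly_ind: h => [|h c IH]; first by rewrite !rmorph0 trmx0.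
rewrite !(rmorphD, rmorphM) /= !(horner_mx_X, horner_mx_C) linearD /=.
rewrite tr_scalar_mx -IH -!mulmxE -trmx_mul.
by have := comm_mx_horner h (erefl (A *m A)); rewrite /comm_mx => ->.
Qed.

Lemma horner_mx_comp A h p :
  horner_mx A (h \Po p) = horner_mx (horner_mx A p) h.
Proof.
elim/poly_ind: h => [|h c IH]; first by rewrite comp_poly0 !rmorph0.
rewrite comp_polyD comp_polyM comp_polyX comp_polyC !(rmorphD, rmorphM) /=.
by rewrite !(horner_mx_X, horner_mx_C) IH.
Qed.

(* With [B] the conjugate transpose of [A] and [p'] the conjugate of [p]: if
   [A] is unitary and [p(A) p'(A^-1) = 1], then [p(A)] is unitary. *)
Lemma horner_mx_preserves_form A B L r p p' :
  A *m L *m B = L -> horner_mx A r * A = 1 ->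
  horner_mx A p * horner_mx (horner_mx A r) p' = 1 ->
  horner_mx A p *m L *m horner_mx B p' = L.
Proof.
move=> ALB rA pp'; set Ainv := horner_mx A r.
have AinvL : Ainv * L = L * B by rewrite -[in LHS]ALB !mulmxE !mulrA rA mul1r.
by rewrite !mulmxE -mulrA -(horner_mx_intertwine p' AinvL) mulrA pp' mul1r.
Qed.

End HornerMx.

Lemma horner_mx_dvdp_sub (F : fieldType) n (A : 'M[F]_n.+1) (f a b : {poly F}) :
  horner_mx A f = 0 -> f %| a - b -> horner_mx A a = horner_mx A b.
Proof.
move=> Af0 /dvdpP [c ab]; apply/eqP; rewrite -subr_eq0 -rmorphB ab.
by rewrite rmorphM /= Af0 mulr0.
Qed.

Lemma pnat_pchar_expn (F : finFieldType) p k n :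
  prime p -> #|F| = (p ^ n)%N -> [pchar F].-nat (p ^ k)%N.
Proof.
move=> p_prime cardF; have p_char : p \in [pchar F] by exact: card_finPcharP cardF _.
by rewrite pnatX (pnatE _ p_prime) p_char.
Qed.

(* The characteristic hypothesis is an argument so that the ring morphism
   instance below can be keyed on it. *)
Definition pFrobenius_expn (F : fieldType) q of [pchar F].-nat q :=
  fun x : F => x ^+ q.

Section FrobeniusExpn.
Variables (F : fieldType) (q : nat) (q_pchar : [pchar F].-nat q).

Lemma pFrobenius_expn_is_zmod_morphism : zmod_morphism (pFrobenius_expn q_pchar).
Proof. by move=> x y; rewrite /pFrobenius_expn exprDn_pchar ?exprNn_pchar. Qed.

Lemma pFrobenius_expn_is_monoid_morphism :
  monoid_morphism (pFrobenius_expn q_pchar).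
Proof. by split=> [|x y]; rewrite /pFrobenius_expn ?expr1n ?exprMn. Qed.

HB.instance Definition _ := GRing.isZmodMorphism.Build F F
  (pFrobenius_expn q_pchar) pFrobenius_expn_is_zmod_morphism.
HB.instance Definition _ := GRing.isMonoidMorphism.Build F F
  (pFrobenius_expn q_pchar) pFrobenius_expn_is_monoid_morphism.

End FrobeniusExpn.

Lemma unitary_horner_mx (F : finFieldType) q (phi : {rmorphism F -> F}) n
    (C : 'M[F]_n.+1) (p r : {poly F}) :
  fbar q =1 phi -> unitary q C -> char_poly C %| r * 'X - 1 ->
  char_poly C %| p * (map_poly phi p \Po r) - 1 ->
  unitary q (horner_mx C p).
Proof.
move=> fbarE /andP[_ /eqP C_unitary].
have /horner_mx_dvdp_sub C_mod := Cayley_Hamilton C.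
move=> /C_mod rC /C_mod pC.
rewrite rmorphM rmorph1 /= horner_mx_X in rC.
rewrite rmorphM rmorph1 /= horner_mx_comp in pC.
rewrite /unitary (eq_map_mx _ fbarE) map_horner_mx trmx_horner_mx.
rewrite (eq_map_mx _ fbarE) in C_unitary.
apply/andP; split; first by case: (mulmx1_unit pC).
by apply/eqP; apply: horner_mx_preserves_form rC pC.
Qed.

Lemma ptilde_dvdp_reverse (F : finFieldType) q (phi : {rmorphism F -> F})
    (g : {poly F}) d :
  fbar q =1 phi -> size g = d.+1 -> g.[0] != 0 -> ptilde q g = g ->
  g %| \poly_(i < d.+1) (map_poly phi g)`_(d - i).
Proof.
move=> fbarE size_g g0; rewrite /ptilde /pbar (eq_map_poly fbarE) size_g /= => g_tilde.
have c_neq0 : (fbar q g.[0])^-1 != 0 by rewrite invr_eq0 fbarE fmorph_eq0.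
by rewrite -(dvdpZr _ _ c_neq0) g_tilde.
Qed.

Lemma mxpowE (F : finFieldType) n (A : 'M[F]_n.+1) m : mxpow A m = A ^+ m.
Proof. by elim: m => [|m IH] //=; rewrite exprS -IH /mxpow /= mulmxE. Qed.

Theorem lemma4p2 (F : finFieldType) (q M d : nat) (f g : {poly F})
  (C : 'M[F]_d) :
  prime_power q -> #|F| = (q ^ 2)%N -> (2 <= M)%N ->
  SCIM q f -> odd d -> size f = d.+1 ->
  SCIM q g -> size g = d.+1 -> g %| f \Po 'X^M ->
  unitary q C -> char_poly C = f ->
  exists alpha : 'M[F]_d, unitary q alpha /\ mxpow alpha M = C.
Proof.
move=> [p [k [p_prime [_ ->]]]] cardF _ [_ f0 f_irr _] + size_f [_ g0 _ g_tilde] size_g.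
case: d C size_f size_g => // n C size_f size_g _ g_dvd C_unitary charC.
have q_pchar := pnat_pchar_expn k p_prime (etrans cardF (esym (expnM _ _ _))).
pose phi : {rmorphism F -> F} := pFrobenius_expn q_pchar.
have fbarE : fbar (p ^ k)%N =1 phi by [].
have g_rev := ptilde_dvdp_reverse fbarE size_g g0 g_tilde.
have g_gt1 : (1 < size g)%N by rewrite size_g.
have [s gs] := inverse_X_mod g0.
have [r fr] := inverse_X_mod f0.
have g_conj_s : g %| map_poly phi g \Po s.
  by apply: dvdp_comp_inv g0 _ gs g_rev; rewrite size_map_poly size_g.
have [P gP] := comp_Xn_mod_onto f_irr g_gt1 g_dvd (etrans size_f (esym size_g)) 'X.
have fPr := dvdp_conj_comp_inv f_irr g_gt1 g_dvd gs g_conj_s gP fr.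
rewrite -charC in fr fPr.
exists (horner_mx C P); split; first exact: unitary_horner_mx fbarE C_unitary fr fPr.
rewrite mxpowE -rmorphXn /=.
have /horner_mx_dvdp_sub -> := dvdp_expn_sub_X f_irr g_gt1 g_dvd gP.
  by rewrite horner_mx_X.
by rewrite -charC Cayley_Hamilton.
Qed.
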